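(* Let $\gamma:\pi\to\pi'$ be an arrow of some Rauzy class on the alphabet $\mathcal{A}$. Then $Q_{\pi'}(u)=Q_\pi(u\overline{B}_\gamma)$ for every $u\in(\mathbb{Z}/2\mathbb{Z})^{\mathcal{A}}$.
   Context: Permutations $\pi=(\pi_{\mathrm t},\pi_{\mathrm b})$ are pairs of bijections $\mathcal{A}\to\{1,\dots,d\}$, $d\ge3$, irreducible and nondegenerate; $\alpha_{\varepsilon,j}=\pi_\varepsilon^{-1}(j)$. Rauzy induction: the top operation, with $\alpha_{\mathrm b,k}=\alpha_{\mathrm t,d}$, replaces the bottom row by $\alpha_{\mathrm b,1},\dots,\alpha_{\mathrm b,k},\alpha_{\mathrm b,d},\alpha_{\mathrm b,k+1},\dots,\alpha_{\mathrm b,d-1}$ (winner $\alpha_{\mathrm t,d}$, loser $\alpha_{\mathrm b,d}$); the bottom operation, with $\alpha_{\mathrm t,k}=\alpha_{\mathrm b,d}$, replaces the top row by $\alpha_{\mathrm t,1},\dots,\alpha_{\mathrm t,k},\alpha_{\mathrm t,d},\alpha_{\mathrm t,k+1},\dots,\alpha_{\mathrm t,d-1}$ (winner $\alpha_{\mathrm b,d}$, loser $\alpha_{\mathrm t,d}$). An arrow $\gamma:\pi\to\pi'$ is one such operation, and $B_\gamma=\mathrm{Id}+E_{\alpha_{\mathrm l}\alpha_{\mathrm w}}$ with $\alpha_{\mathrm w},\alpha_{\mathrm l}$ its winner and loser. $(\Omega_\pi)_{\alpha\beta}=+1$ if $\pi_{\mathrm t}(\alpha)<\pi_{\mathrm t}(\beta)$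 and $\pi_{\mathrm b}(\alpha)>\pi_{\mathrm b}(\beta)$, $-1$ if the reverse inequalities hold, $0$ otherwise. A bar denotes reduction mod 2. $Q_\pi(u)=\sum_{\pi_{\mathrm t}(\alpha)<\pi_{\mathrm t}(\beta)}u_\alpha(\Omega_\pi)_{\alpha\beta}u_\beta+\sum_\alpha u_\alpha\bmod 2$ for $u\in(\mathbb{Z}/2\mathbb{Z})^{\mathcal{A}}$; vectors act on matrices from the left (row vectors). *)

From mathcomp Require Import all_boot all_algebra.
Set Implicit Arguments. Unset Strict Implicit. Unset Printing Implicit Defensive.
Import GRing.Theory.
Local Open Scope ring_scope.

(* A permutation pi = (pi_t, pi_b) on the finite alphabet A is represented by
   the two position maps pi_t, pi_b : A -> nat, each a bijection onto
   {1, ..., d} with d = #|A|. *)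
Definition is_row (A : finType) (p : A -> nat) : Prop :=
  injective p /\ (forall a, (1 <= p a <= #|A|)%N).

Definition irreducible (A : finType) (pt pb : A -> nat) : Prop :=
  forall k : nat, (1 <= k < #|A|)%N ->
    [set a : A | (pt a <= k)%N] <> [set a : A | (pb a <= k)%N].

(* Insertion of the loser l right after the position k = p_w w in row p,
   where p l = d:  alpha_1..alpha_k, alpha_d, alpha_{k+1}, .., alpha_{d-1}. *)
Definition rauzy_row (A : finType) (p : A -> nat) (w l : A) : A -> nat :=
  fun b => if b == l then (p w).+1
           else if (p w < p b)%N then (p b).+1 else p b.

Definition top_arrow (A : finType) (pt pb pt' pb' : A -> nat) (w l : A) : Prop :=
  pt w = #|A| /\ pb l = #|A| /\ pt' = pt /\ pb' = rauzy_row pb w l.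

Definition bot_arrow (A : finType) (pt pb pt' pb' : A -> nat) (w l : A) : Prop :=
  pb w = #|A| /\ pt l = #|A| /\ pb' = pb /\ pt' = rauzy_row pt w l.

Definition rauzy_arrow (A : finType) (pt pb pt' pb' : A -> nat) (w l : A) : Prop :=
  top_arrow pt pb pt' pb' w l \/ bot_arrow pt pb pt' pb' w l.

Definition Bmat (A : finType) (w l : A) (a b : A) : int :=
  ((a == b)%:R + ((a == l) && (b == w))%:R)%R.

Definition bar (z : int) : 'F_2 := z%:~R.

Definition vmul (A : finType) (u : A -> 'F_2) (M : A -> A -> 'F_2) : A -> 'F_2 :=
  fun b => \sum_(a : A) u a * M a b.

Definition Omega (A : finType) (pt pb : A -> nat) (a b : A) : int :=
  if (pt a < pt b)%N && (pb a > pb b)%N then 1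
  else if (pt a > pt b)%N && (pb a < pb b)%N then -1 else 0.

Definition Qform (A : finType) (pt pb : A -> nat) (u : A -> 'F_2) : 'F_2 :=
  \sum_(a : A) \sum_(b : A | (pt a < pt b)%N) u a * bar (Omega pt pb a b) * u b
  + \sum_(a : A) u a.

From mathcomp Require Import all_boot all_algebra.
From mathcomp Require Import zify ring.
Import GRing.Theory.
Local Open Scope ring_scope.
Set Implicit Arguments. Unset Strict Implicit.

(* Mod 2, Q_pi(u) is sum_a u_a plus the number of pairs in the support of u
   that the two rows order differently (crossing pairs); this count is
   symmetric in the two rows, so only the top operation needs an argument.
   Moving the loser l behind the winner w in the bottom row toggles exactly
   the crossings {l, a} with a after w in the bottom row.  On the other side,
   u B adds u_l to u_w, and as w is last in the top row this changes the
   crossing count by u_l times the number of those same a in the support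
   of u, l included.  The discrepancy u_l^2 = u_l is made up by the change
   u_l of sum_a u_a. *)

Section RauzyRow.
Variables (A : finType) (p : A -> nat) (w l : A).

Lemma rauzy_row_loser : rauzy_row p w l l = (p w).+1.
Proof. by rewrite /rauzy_row eqxx. Qed.

Lemma rauzy_row_ltE a b : a != l -> b != l ->
  (rauzy_row p w l a < rauzy_row p w l b)%N = (p a < p b)%N.
Proof.
rewrite /rauzy_row => /negbTE -> /negbTE ->.
by case: (ltnP (p w) (p a)); case: (ltnP (p w) (p b)) => ? ? /=; lia.
Qed.

Lemma rauzy_row_lt_loser a : a != l ->
  (rauzy_row p w l a < rauzy_row p w l l)%N = ~~ (p w < p a)%N.
Proof.
rewrite rauzy_row_loser /rauzy_row => /negbTE ->.
by case: (ltnP (p w) (p a)) => ? /=; lia.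
Qed.

Lemma rauzy_row_loser_lt a : a != l ->
  (rauzy_row p w l l < rauzy_row p w l a)%N = (p w < p a)%N.
Proof.
rewrite rauzy_row_loser /rauzy_row => /negbTE ->.
case: (ltnP (p w) (p a)) => h /=; first by rewrite ltnS.
by apply/negbTE; rewrite -leqNgt (leqW h).
Qed.

End RauzyRow.

Lemma sum_pair_splitD1 (T : finType) (M : nmodType) (l : T) (F : T -> T -> M) :
  \sum_a \sum_b F a b = F l l + \sum_(b | b != l) F l b
    + \sum_(a | a != l) F a l + \sum_(a | a != l) \sum_(b | b != l) F a b.
Proof.
rewrite (bigD1 l) //= (bigD1 l) //= -!addrA; congr (_ + (_ + _)).
by rewrite (eq_bigr _ (fun a _ => bigD1 l isT)) big_split.
Qed.

Section CrossingForm.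
Variables (A : finType) (R : comNzRingType).
Implicit Types (pt pb : A -> nat) (u : A -> R).

Definition crossing pt pb (a b : A) := (pt a < pt b)%N && (pb b < pb a)%N.

Definition cross_form pt pb u :=
  \sum_a \sum_b (crossing pt pb a b)%:R * u a * u b.

Lemma cross_formC pt pb u : cross_form pt pb u = cross_form pb pt u.
Proof.
rewrite /cross_form exchange_big; apply: eq_bigr => a _; apply: eq_bigr => b _.
by rewrite /crossing andbC mulrAC.
Qed.

Lemma cross_form_shift pt pb (w : A) u t :
  (forall a, a != w -> pt a < pt w)%N ->
  cross_form pt pb (fun b => u b + (b == w)%:R * t)
  = cross_form pt pb u + t * \sum_a (pb w < pb a)%:R * u a.
Proof.
move=> pt_max.
have cr_from_w b : crossing pt pb w b = false.
  rewrite /crossing; case: (eqVneq b w) => [->|/pt_max bw].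
    by rewrite ltnn.
  by rewrite ltnNge (ltnW bw).
have cr_to_w a : crossing pt pb a w = (pb w < pb a)%N.
  by case: (eqVneq a w) => [->|/pt_max aw]; rewrite /crossing ?ltnn ?aw.
rewrite /cross_form mulr_sumr -big_split; apply: eq_bigr => a _ /=.
case: (eqVneq a w) => [->|aw].
  by rewrite ltnn mul0r mulr0 addr0 !big1 // => b _; rewrite cr_from_w !mul0r.
rewrite mul0r addr0.
under eq_bigr => b _ do rewrite mulrDr.
rewrite big_split /=; congr (_ + _).
rewrite (bigD1 w) //= eqxx big1 ?addr0 => [|b /negbTE ->].
  by rewrite cr_to_w mul1r mulrC.
by rewrite mul0r mulr0.
Qed.

End CrossingForm.

Section RauzyCrossingForm.
Variables (A : finType) (R : comNzRingType).
Hypothesis R_char2 : 2 \in [pchar R].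
Variables (pt pb : A -> nat) (w l : A).
Hypothesis pt_inj : injective pt.
Hypothesis pb_max : forall a, a != l -> (pb a < pb l)%N.

Lemma natr_xor_pchar2 (x y : bool) :
  (x && ~~ y)%:R + (~~ x && y)%:R = x%:R + y%:R :> R.
Proof. by case: x; case: y; rewrite /= ?addr0 ?add0r // addrr_pchar2. Qed.

Lemma cross_form_rauzy_row (u : A -> R) :
  cross_form pt (rauzy_row pb w l) u
  = cross_form pt pb u + u l * \sum_(a | a != l) (pb w < pb a)%:R * u a.
Proof.
have pt_lt_l a : a != l -> (pt a < pt l)%N = ~~ (pt l < pt a)%N.
  by move=> al; rewrite -leqNgt ltn_neqAle (inj_eq pt_inj) al.
set pb' := rauzy_row pb w l.
rewrite /cross_form !(sum_pair_splitD1 l).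
have -> : \sum_(a | a != l) \sum_(b | b != l)
      (crossing pt pb' a b)%:R * u a * u b
    = \sum_(a | a != l) \sum_(b | b != l) (crossing pt pb a b)%:R * u a * u b.
  apply: eq_bigr => a al; apply: eq_bigr => b bl.
  by rewrite /crossing rauzy_row_ltE.
rewrite /crossing !ltnn /= !mul0r !add0r.
rewrite [RHS]addrAC; congr (_ + _).
rewrite mulr_sumr -!big_split; apply: eq_bigr => a al /=.
rewrite rauzy_row_lt_loser // rauzy_row_loser_lt // pt_lt_l //.
rewrite (pb_max al) (leq_gtF (ltnW (pb_max al))) andbT andbF /=.
rewrite mulr0n !mul0r addr0.
set x := (pt l < pt a)%N; set y := (pb w < pb a)%N.
transitivity (((x && ~~ y)%:R + (~~ x && y)%:R) * (u l * u a)); first by ring.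
by rewrite natr_xor_pchar2; ring.
Qed.

End RauzyCrossingForm.

Section Rows.
Variable A : finType.

Lemma is_row_lt_last (p : A -> nat) w : is_row p -> p w = #|A| ->
  forall a, a != w -> (p a < p w)%N.
Proof.
move=> [p_inj p_range] pw a aw.
by rewrite ltn_neqAle (inj_eq p_inj) aw pw; case/andP: (p_range a).
Qed.

Lemma is_row_le_pred_card (p : A -> nat) w a : is_row p -> p w = #|A| ->
  (p a <= #|A|.-1)%N = (a != w).
Proof.
move=> rp pw.
have d_gt0 : (0 < #|A|)%N by rewrite -pw; case: rp => _ /(_ w) /andP[].
case: (eqVneq a w) => [->|/(is_row_lt_last rp pw)]; rewrite pw.
  by case: #|A| d_gt0 => // n _; rewrite /= ltnn.
by case: #|A|.
Qed.

Lemma irreducible_last_neq (pt pb : A -> nat) a b : (1 < #|A|)%N ->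
  is_row pt -> is_row pb -> irreducible pt pb ->
  pt a = #|A| -> pb b = #|A| -> a != b.
Proof.
move=> A_gt1 rt rb irr pta pbb; apply/eqP => ab; subst b.
apply: (irr #|A|.-1); first lia.
apply/setP => c.
by rewrite !inE (is_row_le_pred_card _ rt pta) (is_row_le_pred_card _ rb pbb).
Qed.

End Rows.

Section QformF2.
Variable A : finType.
Implicit Types (pt pb : A -> nat) (u : A -> 'F_2).

Lemma pchar_F2 : 2 \in [pchar 'F_2].
Proof. exact: pchar_Fp. Qed.

Lemma mulrr_F2 (x : 'F_2) : x * x = x.
Proof. by case: x => [[|[|]]] // ?; apply/val_inj. Qed.

Lemma eq_Qform pt pb u v : u =1 v -> Qform pt pb u = Qform pt pb v.
Proof.
move=> uv; rewrite /Qform; under eq_bigr do under eq_bigr do rewrite !uv.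
by under [\sum_a u a]eq_bigr do rewrite uv.
Qed.

Lemma Qform_crossE pt pb u : Qform pt pb u = cross_form pt pb u + \sum_a u a.
Proof.
congr (_ + _); apply: eq_bigr => a _; rewrite big_mkcond; apply: eq_bigr => b _.
rewrite /crossing /Omega; case: ltnP => [ab|ba] /=; last by rewrite !mul0r.
rewrite (leq_gtF (ltnW ab)) /=.
by case: ltnP => _; rewrite /bar ?mulr1z ?mulr0z ?mulr1 ?mul1r ?mulr0 ?mul0r.
Qed.

Lemma vmul_BmatE (w l : A) u :
  vmul u (fun a b => bar (Bmat w l a b)) =1 (fun b => u b + (b == w)%:R * u l).
Proof.
move=> b; rewrite /vmul /Bmat /bar.
under eq_bigr do rewrite intrD !mulrz_nat mulrDr.
rewrite big_split /=; congr (_ + _).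
  rewrite (bigD1 b) //= eqxx mulr1 big1 ?addr0 // => a /negbTE ->.
  by rewrite mulr0.
rewrite (bigD1 l) //= eqxx big1 ?addr0 => [|a /negbTE ->].
  by rewrite mulrC.
by rewrite mulr0.
Qed.

Lemma QformC pt pb u : Qform pt pb u = Qform pb pt u.
Proof. by rewrite !Qform_crossE cross_formC. Qed.

Lemma Qform_rauzy_row pt pb (w l : A) u :
  injective pt -> (forall a, a != w -> pt a < pt w)%N ->
  (forall a, a != l -> pb a < pb l)%N -> w != l ->
  Qform pt (rauzy_row pb w l) u
  = Qform pt pb (fun b => u b + (b == w)%:R * u l).
Proof.
move=> pt_inj pt_max pb_max wl.
rewrite !Qform_crossE (cross_form_rauzy_row pchar_F2) // cross_form_shift //.
rewrite [\sum_a _ * u a](bigD1 l) //= (pb_max w wl) mul1r mulrDr mulrr_F2.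
have -> : \sum_b (u b + (b == w)%:R * u l) = \sum_b u b + u l.
  rewrite big_split; congr (_ + _).
  rewrite (bigD1 w) //= eqxx mul1r big1 ?addr0 // => b /negbTE ->.
  by rewrite mul0r.
set X := \sum_(a | a != l) _; set S := cross_form _ _ _.
transitivity (S + u l * X + \sum_b u b + (u l + u l)); last by ring.
by rewrite addrr_pchar2 ?addr0 // pchar_F2.
Qed.

End QformF2.

Theorem lemma2p11 (A : finType) (pt pb pt' pb' : A -> nat) (w l : A) :
  (3 <= #|A|)%N ->
  is_row pt -> is_row pb -> irreducible pt pb ->
  rauzy_arrow pt pb pt' pb' w l ->
  forall u : A -> 'F_2,
    Qform pt' pb' u = Qform pt pb (vmul u (fun a b => bar (Bmat w l a b))).
Proof.
move=> A_ge3 rt rb irr arrow u.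
have A_gt1 : (1 < #|A|)%N by apply: leq_trans A_ge3.
rewrite (eq_Qform _ _ (vmul_BmatE w l u)).
case: arrow => [[ptw [pbl [-> ->]]] | [pbw [ptl [-> ->]]]].
  apply: Qform_rauzy_row; first exact: rt.1.
  - exact: is_row_lt_last rt ptw.
  - exact: is_row_lt_last rb pbl.
  - exact: irreducible_last_neq irr ptw pbl.
rewrite QformC [RHS]QformC; apply: Qform_rauzy_row; first exact: rb.1.
- exact: is_row_lt_last rb pbw.
- exact: is_row_lt_last rt ptl.
- by rewrite eq_sym; exact: irreducible_last_neq irr ptl pbw.
Qed.
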